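(* Suppose the hypotheses of Theorem 1 hold (Assumptions 1 and 2, $J_0\ne\emptyset$, $0<\delta<1$, Condition (L) for all $j$ with $c'\in(0,1)$ satisfying Condition (C)), and let $c_1$ be the constant depending only on $\delta$ for which the bound $$\mathbb P(J_0\subseteq\hat J_0)\ge 1-\mathbb P(\mathcal E_{\delta,q^*}^c)-e^{-\frac{3n}{16 d_{q^*}}}-\sum_{l=1}^s\sum_{m=0}^{q^*-(s-l)}\binom{s}{l}\binom{q-s}{m}4\exp\Big(-c_1\frac{n^2(1-\rho_{q^*}^2)^2\kappa_l^2}{\sigma^4d_{q^*-s+l}+\sigma^2n(1-\rho_{q^*}^2)\kappa_l}\Big)$$ holds. Then for each $c_2>0$ there is $c_3>0$ depending only on $c_1$ and $c_2$ such that $\mathbb P(J_0\subseteq\hat J_0)\ge1-\mathbb P(\mathcal E_{\delta,q^*}^c)-q^{-c_2}$, provided $$\max\Big\{\frac{\sigma^2\sqrt{q^*d_{q^*}\log(eq/q^* )}}{(1-\rho_{q^*}^2)\kappa},\ \frac{\sigma^2q^*\log(eq/q^* )}{(1-\rho_{q^*}^2)\kappa},\ d_{q^*}\log q\Big\}\le c_3n.$$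
   Context: Let $q\ge1$ and let $(Y,X)$ be a pair of random variables with $X=(X_1,\dots,X_q)^T$, each $X_j$ real-valued, and $Y=\sum_{j=1}^q f_j(X_j)+\epsilon$, where $f_j\in L^2(\mathbb P^{X_j})$, $\mathbb E[f_j(X_j)]=0$ for $j=1,\dots,q-1$, and $\epsilon$ is a centered Gaussian variable with variance $\sigma^2$, independent of $X$. The space $L^2(\mathbb P^X)$ carries the inner product $\langle g,h\rangle=\mathbb E[g(X)h(X)]$ and norm $\|g\|=\langle g,g\rangle^{1/2}$. Let $H_q=L^2(\mathbb P^{X_q})$ and $H_j=\{h\in L^2(\mathbb P^{X_j}):\mathbb E[h(X_j)]=0\}$ for $j<q$, viewed as subspaces of $L^2(\mathbb P^X)$ via $x\mapsto h(x_j)$; for $J\subseteq\{1,\dots,q\}$ let $H_J=\sum_{j\in J}H_j$ (with $H_\emptyset=\{0\}$). Let $J_0=\{j:\|f_j\|>0\}$, $s=|J_0|$, and let $q^*$ be an integer with $s\le q^*$. Let $\rho_{q^*}$ be the supremum of $\langle h_1,h_2\rangle/(\|h_1\|\|h_2\|)$ over all nonzero $h_1\in H_{J_1}$, $h_2\in H_{J_2}$ and all $J_1,J_2\subseteq\{1,\dots,q\}$ with $J_1\cap J_2=\emptyset$ and $|J_1|,|J_2|\le q^*$. Assumption 1 is the condition $\rho_{q^*}<1$. $\kappa=\min_{\emptyset\neq J\subseteq J_0}\|\sum_{j\in J}f_j\|^2$ and, for $1\le l\le s$, $\kappa_l=\min_{J'\subseteq J_0,|J'|=l}\|\sum_{j\in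 J'}f_j\|^2$. $\epsilon'_{q^*}$ is a positive number such that $\|\sum_{j\in J}g_j\|^2\le(1+\epsilon'_{q^*})\sum_{j\in J}\|g_j\|^2$ for all $J$ with $|J|\le q^*$ and all $g_j\in H_j$. Assumption 2: each $X_j$ takes values in $[0,1]$ and has a density $p_j$ with respect to Lebesgue measure with $c\le p_j\le 1/c$ for a constant $c>0$, and $f_j\in\tilde W_j(\alpha_j,K_j)=\{\sum_{k\ge1}\theta_k\phi_k:\sum_{k\ge1}(2\pi k)^{2\alpha_j}(\theta_{2k}^2+\theta_{2k+1}^2)\le K_j^2\}$ with $\alpha_j>1/2$, $K_j>0$, where $\phi_1=1$, $\phi_{2k}(x)=\sqrt2\cos(2\pi kx)$, $\phi_{2k+1}(x)=\sqrt2\sin(2\pi kx)$, $k\ge1$, on $[0,1]$. Given integers $m_j\ge1$, $V_j$ is the intersection of $H_j$ with the linear span of $\phi_1(x_j),\dots,\phi_{m_j}(x_j)$; $V_J=\sum_{j\in J}V_j$, $d_J=\dim V_J$, $d_l=\max_{|J|=l}d_J$. $C_j>0$ denotes a constant depending only on $\alpha_j$ and $c$ such that $\|h-\Pi_{V_j}h\|^2\le C_jK_j^2m_j^{-2\alpha_j}$ and $\|h-\Pi_{V_j}h\|_\infty^2\le C_jK_j^2m_j^{1-2\alpha_j}$ for all $h\in\tilde W_j(\alpha_j,K_j)\cap H_j$ and all $m_j\ge1$, where $\Pi_{V_j}$ is the orthogonal projection onto $V_j$. Condition (L): $m_j\ge\big(C_jK_j^2q^*(1+\epsilon'_{q^*})/(c'(1-\rho_{q^*}^2)\kappa)\big)^{1/(2\alpha_j)}$,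 where $c'\in(0,1)$ is a constant. Condition (C): $\frac23(1-\sqrt{c'})^2-8\frac{1+\delta}{(1-\delta)^2}c'\ge\frac12$. The data $(Y^i,X^i)$, $i=1,\dots,n$, are independent copies of $(Y,X)$, and $\mathbf Y=(Y^1,\dots,Y^n)^T$. The empirical norm is $\|h\|_n^2=\frac1n\sum_{i=1}^nh(X^i)^2$ for functions and $\|u\|_n^2=\frac1n\|u\|_2^2$ for $u\in\mathbb R^n$. $\hat\Pi_J$ is the orthogonal projection of $\mathbb R^n$ onto $\{(g(X^1),\dots,g(X^n))^T:g\in V_J\}$. The estimator is $\hat J_0\in\arg\max_{J\subseteq\{1,\dots,q\},|J|\le q^*}\big(\|\hat\Pi_J\mathbf Y\|_n^2-\sigma^2d_J/n\big)$. For $0<\delta<1$ and $J\subseteq\{1,\dots,q\}$, $\mathcal E_{\delta,J}$ is the event that $(1-\delta)\|g\|^2\le\|g\|_n^2\le(1+\delta)\|g\|^2$ for all $g\in V_J$, and $\mathcal E_{\delta,q^*}=\bigcap_{J\subseteq\{1,\dots,q\},|J|\le q^*}\mathcal E_{\delta,J\cup J_0}$. *)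

From Stdlib Require Export Reals.
Open Scope R_scope.

Fixpoint sumR (n : nat) (f : nat -> R) : R :=
  match n with
  | O => 0
  | S k => sumR k f + f k
  end.

Definition binomR (n k : nat) : R :=
  if Nat.leb k n then C n k else 0.

(* The right-hand side error sum of Theorem 1:
   sum_{l=1}^{s} sum_{m=0}^{qs-(s-l)} binom(s,l) binom(q-s,m)
     4 exp(-c1 n^2 (1-rho^2)^2 kap_l^2 /
              (sigma^4 d_{qs-s+l} + sigma^2 n (1-rho^2) kap_l)) *)
Definition thm1_sum (c1 : R) (q qs s n : nat) (d : nat -> nat)
    (rho sigma : R) (kap : nat -> R) : R :=
  sumR s (fun i => let l := S i in
    sumR (S (qs - (s - l))%nat) (fun m =>
      binomR s l * binomR (q - s)%nat m * 4 *
      exp (- c1 * ((INR n)^2 * (1 - rho^2)^2 * (kap l)^2) /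
             (sigma^4 * INR (d (qs - s + l)%nat) + sigma^2 * INR n * (1 - rho^2) * kap l)))).

Definition logeq (q qs : nat) : R := ln (exp 1 * INR q / INR qs).

From Stdlib Require Import Reals Lra Lia Psatz.
Open Scope R_scope.

(* Both error terms of Theorem 1 are at most q^(-c2) / 2, writing qs for q^*.  The first
   one because d_qs log q <= c3 n.  In the double sum C(s, l) <= e^qs and
   C(q - s, m) <= (e q / qs)^qs, while the two remaining sample-size conditions make every
   exponent at least (c1 / (2 c3)) qs log(e q / qs); for c3 small this dominates both
   binomial factors and the at most qs (qs + 1) summands. *)

Lemma exp_le_exp x y : x <= y -> exp x <= exp y.
Proof. intros [H|H]; [left; now apply exp_increasing|subst; lra]. Qed.

Lemma ln_le_ln x y : 0 < x -> x <= y -> ln x <= ln y.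
Proof. intros Hx [H|H]; [left; now apply ln_increasing|subst; lra]. Qed.

Lemma sumR_le n f g :
  (forall i, (i < n)%nat -> f i <= g i) -> sumR n f <= sumR n g.
Proof.
  induction n as [|n IH]; simpl; intros Hfg; [lra|].
  apply Rplus_le_compat; [apply IH; intros; apply Hfg|apply Hfg]; lia.
Qed.

Lemma sumR_const n c : sumR n (fun _ => c) = INR n * c.
Proof. induction n as [|n IH]; simpl sumR; [simpl; ring|rewrite IH, S_INR; ring]. Qed.

Lemma sum_f_R0_ge_term (f : nat -> R) n i :
  (forall k, 0 <= f k) -> (i <= n)%nat -> f i <= sum_f_R0 f n.
Proof.
  intros Hf; induction n as [|n IH]; intros Hi; simpl.
  - replace i with 0%nat by lia; lra.
  - destruct (Nat.eq_dec i (S n)) as [->|Hne].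
    + pose proof (cond_pos_sum f n Hf); lra.
    + pose proof (IH ltac:(lia)); pose proof (Hf (S n)); lra.
Qed.

Lemma C_nonneg N m : 0 <= C N m.
Proof.
  apply Rle_mult_inv_pos; [apply pos_INR|].
  apply Rmult_lt_0_compat; apply INR_fact_lt_0.
Qed.

Lemma binomR_nonneg N m : 0 <= binomR N m.
Proof. unfold binomR; destruct (Nat.leb m N); [apply C_nonneg|lra]. Qed.

Lemma exp_pow x n : exp x ^ n = exp (INR n * x).
Proof. rewrite <- Rpower_pow by apply exp_pos; unfold Rpower; now rewrite ln_exp. Qed.

(* One term of the binomial expansion of (1 + x)^N, and 1 + x <= e^x. *)
Lemma binomR_mul_pow_le_exp N m x :
  0 <= x -> binomR N m * x ^ m <= exp (INR N * x).
Proof.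
  intros Hx; unfold binomR; destruct (Nat.leb m N) eqn:Hm.
  2:{ rewrite Rmult_0_l; left; apply exp_pos. }
  apply Nat.leb_le in Hm.
  apply Rle_trans with ((x + 1) ^ N).
  - rewrite binomial.
    replace (C N m * x ^ m) with (C N m * x ^ m * 1 ^ (N - m)) by (rewrite pow1; ring).
    apply (sum_f_R0_ge_term (fun k => C N k * x ^ k * 1 ^ (N - k))); [|exact Hm].
    intros k; rewrite pow1, Rmult_1_r.
    apply Rmult_le_pos; [apply C_nonneg|now apply pow_le].
  - rewrite <- exp_pow; apply pow_incr; pose proof (exp_ineq1_le x); lra.
Qed.

Lemma ln_le_sub_1 x : 0 < x -> ln x <= x - 1.
Proof. intros Hx; pose proof (exp_ineq1_le (ln x)); rewrite exp_ln in * by exact Hx; lra. Qed.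

Lemma logeq_eq q qs : (0 < q)%nat -> (0 < qs)%nat ->
  logeq q qs = 1 + ln (INR q) - ln (INR qs).
Proof.
  intros Hq Hqs; apply lt_0_INR in Hq, Hqs; pose proof (exp_pos 1).
  unfold logeq, Rdiv; rewrite ln_mult, ln_mult, ln_exp, ln_Rinv;
    try ring; try apply Rmult_lt_0_compat; auto using Rinv_0_lt_compat.
Qed.

Lemma logeq_ge_1 q qs : (1 <= qs <= q)%nat -> 1 <= logeq q qs.
Proof.
  intros Hqs; rewrite logeq_eq by lia.
  assert (ln (INR qs) <= ln (INR q)); [|lra].
  apply ln_le_ln; [apply lt_0_INR; lia|apply le_INR; lia].
Qed.

Lemma one_add_ln_le_mul_logeq q qs : (1 <= qs <= q)%nat ->
  1 + ln (INR q) <= INR qs * logeq q qs.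
Proof.
  intros Hqs; rewrite logeq_eq by lia.
  assert (HS : 1 <= INR qs) by (apply (le_INR 1); lia).
  assert (ln (INR qs) <= ln (INR q)) by (apply ln_le_ln; [lra|apply le_INR; lia]).
  pose proof (ln_le_sub_1 (INR qs) ltac:(lra)).
  assert (0 <= ln (INR qs)) by (rewrite <- ln_1; apply ln_le_ln; lra).
  nra.
Qed.

(* The classical bound C(N, m) <= (e q / qs)^qs for N <= q and m <= qs:
   apply [binomR_mul_pow_le_exp] with x = qs / q. *)
Lemma binomR_le_exp_logeq N m q qs : (1 <= qs <= q)%nat -> (N <= q)%nat -> (m <= qs)%nat ->
  binomR N m <= exp (INR qs * logeq q qs).
Proof.
  intros Hqs HN Hm.
  assert (HS : 1 <= INR qs) by (apply (le_INR 1); lia).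
  assert (HSQ : INR qs <= INR q) by (apply le_INR; lia).
  set (x := INR qs / INR q).
  assert (Hx : 0 < x) by (apply Rdiv_lt_0_compat; lra).
  assert (Hinvx : 1 <= / x).
  { unfold x; rewrite Rinv_div; apply (Rmult_le_reg_r (INR qs)); [lra|].
    unfold Rdiv; rewrite Rmult_assoc, Rinv_l; lra. }
  assert (Hexp : exp (INR qs * logeq q qs) = exp (INR qs) * (/ x) ^ qs).
  { rewrite <- Rpower_pow by lra; unfold Rpower; rewrite <- exp_plus; f_equal.
    unfold logeq, x; rewrite Rinv_div; unfold Rdiv.
    rewrite Rmult_assoc, ln_mult, ln_exp; try ring; try apply exp_pos.
    apply Rmult_lt_0_compat; [lra|apply Rinv_0_lt_compat; lra]. }
  assert (Hbin : binomR N m * x ^ m <= exp (INR qs)).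
  { eapply Rle_trans; [apply binomR_mul_pow_le_exp; lra|apply exp_le_exp].
    apply Rle_trans with (INR q * x); [apply Rmult_le_compat_r; [lra|apply le_INR; lia]|].
    unfold x; right; field; lra. }
  rewrite Hexp.
  replace (binomR N m) with (binomR N m * x ^ m * (/ x) ^ m)
    by (rewrite Rmult_assoc, <- Rpow_mult_distr, Rinv_r, pow1 by lra; ring).
  apply Rmult_le_compat; [apply Rmult_le_pos; [apply binomR_nonneg|apply pow_le; lra]
    |apply pow_le; lra|exact Hbin|apply Rle_pow; [exact Hinvx|exact Hm]].
Qed.

Lemma le_mul_of_div_le a b c : 0 < b -> a / b <= c -> a <= c * b.
Proof.
  intros Hb H; replace a with (a / b * b) by (field; lra).
  apply Rmult_le_compat_r; lra.
Qed.

Lemma sqr_le_of_mul_sqrt_le a x z : 0 <= a -> 0 <= x -> a * sqrt x <= z -> a ^ 2 * x <= z ^ 2.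
Proof.
  intros Ha Hx H; rewrite <- (sqrt_sqrt x Hx).
  replace (a ^ 2 * (sqrt x * sqrt x)) with ((a * sqrt x) ^ 2) by ring.
  apply pow_incr; split; [apply Rmult_le_pos; [exact Ha|apply sqrt_pos]|exact H].
Qed.

(* With Y = sigma^4 Dl + sigma^2 n t k, each summand of Y times a is at most c n^2 t^2 k^2:
   the first by the [sqrt]-condition (using c^2 <= c), the second by the linear one. *)
Lemma tail_exponent_ge c a sigma n t kappa k D Dl :
  0 < c <= 1 -> 0 <= a -> 0 < sigma -> 0 < n -> 0 < t -> 0 < kappa <= k -> 0 <= Dl <= D ->
  sigma ^ 2 * a <= c * n * (t * kappa) ->
  sigma ^ 4 * (a * D) <= (c * n * (t * kappa)) ^ 2 ->
  a / (2 * c) <= n ^ 2 * t ^ 2 * k ^ 2 / (sigma ^ 4 * Dl + sigma ^ 2 * n * t * k).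
Proof.
  intros Hc Ha Hs Hn Ht Hk HD Hlin Hsqrt.
  set (X := n ^ 2 * t ^ 2 * k ^ 2).
  assert (HntK : 0 < n * t * kappa) by (repeat apply Rmult_lt_0_compat; lra).
  assert (HY : 0 < sigma ^ 4 * Dl + sigma ^ 2 * n * t * k).
  { assert (0 <= sigma ^ 4 * Dl) by (apply Rmult_le_pos; [apply pow_le|]; lra).
    assert (0 < sigma ^ 2 * n * t * k) by (repeat apply Rmult_lt_0_compat; try apply pow_lt; lra).
    lra. }
  assert (Hfirst : a * (sigma ^ 4 * Dl) <= c * X).
  { apply Rle_trans with (sigma ^ 4 * (a * D)).
    { replace (a * (sigma ^ 4 * Dl)) with (sigma ^ 4 * (a * Dl)) by ring.
      apply Rmult_le_compat_l; [apply pow_le; lra|apply Rmult_le_compat_l; lra]. }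
    apply Rle_trans with (c * (n * t * kappa) ^ 2); [nra|].
    unfold X; apply Rmult_le_compat_l; [lra|].
    replace (n ^ 2 * t ^ 2 * k ^ 2) with ((n * t * k) ^ 2) by ring.
    apply pow_incr; split; [lra|]; apply Rmult_le_compat_l; nra. }
  assert (Hsecond : a * (sigma ^ 2 * n * t * k) <= c * X).
  { unfold X.
    replace (a * (sigma ^ 2 * n * t * k)) with (sigma ^ 2 * a * (n * t * k)) by ring.
    apply Rle_trans with (c * n * (t * kappa) * (n * t * k));
      [apply Rmult_le_compat_r; [nra|exact Hlin]|].
    replace (c * n * (t * kappa) * (n * t * k)) with (c * (n * t) ^ 2 * k * kappa) by ring.
    replace (c * (n ^ 2 * t ^ 2 * k ^ 2)) with (c * (n * t) ^ 2 * k * k) by ring.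
    apply Rmult_le_compat_l; [|lra].
    repeat apply Rmult_le_pos; try apply pow_le; nra. }
  apply (Rmult_le_reg_r (2 * c * (sigma ^ 4 * Dl + sigma ^ 2 * n * t * k))); [nra|].
  replace (a / (2 * c) * (2 * c * (sigma ^ 4 * Dl + sigma ^ 2 * n * t * k)))
    with (a * (sigma ^ 4 * Dl) + a * (sigma ^ 2 * n * t * k)) by (field; lra).
  replace (X / (sigma ^ 4 * Dl + sigma ^ 2 * n * t * k) * (2 * c * (sigma ^ 4 * Dl + sigma ^ 2 * n * t * k)))
    with (2 * c * X) by (field; lra).
  lra.
Qed.

Lemma exp_opp_le_half_Rpower q c x : 0 < q -> c * ln q + ln 2 <= x ->
  exp (- x) <= Rpower q (- c) / 2.
Proof.
  intros Hq Hx; unfold Rpower, Rdiv; rewrite <- (exp_ln (/ 2)) by lra.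
  rewrite <- exp_plus, ln_Rinv by lra; apply exp_le_exp; lra.
Qed.

Lemma ln_2_le_1 : ln 2 <= 1.
Proof.
  rewrite <- (ln_exp 1); apply ln_le_ln; [lra|].
  pose proof (exp_ineq1_le 1); lra.
Qed.

Lemma mul_succ_mul_4_le_exp x : 1 <= x -> x * (x + 1) * 4 <= exp (4 * x).
Proof.
  intros Hx; pose proof (exp_ineq1_le x); pose proof (exp_ineq1_le 1).
  assert (H4 : 4 <= exp (2 * x)).
  { apply Rle_trans with (exp 1 * exp 1); [nra|].
    rewrite <- exp_plus; apply exp_le_exp; lra. }
  replace (4 * x) with (x + x + 2 * x) by ring; rewrite !exp_plus.
  apply Rmult_le_compat; try nra; apply Rmult_le_compat; lra.
Qed.

(* x (x + 1) 4 <= e^(4 x) and 5 x + a <= 6 a, so the exponent is at most - (c2 + 1) a. *)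
Lemma count_mul_exp_le x a K c2 lq : 1 <= x <= a -> 1 + lq <= a -> 0 <= lq -> 0 < c2 ->
  c2 + 7 <= K -> x * (x + 1) * (4 * exp (x + a - K * a)) <= exp (- (c2 * lq + 1)).
Proof.
  intros Hx Ha Hlq Hc2 HK.
  rewrite <- Rmult_assoc.
  apply Rle_trans with (exp (4 * x) * exp (x + a - K * a)).
  { apply Rmult_le_compat_r; [left; apply exp_pos|now apply mul_succ_mul_4_le_exp]. }
  rewrite <- exp_plus; apply exp_le_exp; nra.
Qed.

Section Theorem1Sum.

Variables (c1 c : R) (q qs s n : nat) (d : nat -> nat) (rho sigma kappa : R) (kap : nat -> R).

Hypotheses (Hc1 : 0 < c1) (Hc : 0 < c <= 1)
  (Hs : (1 <= s)%nat) (Hsqs : (s <= qs)%nat) (Hqsq : (qs <= q)%nat) (Hn : (1 <= n)%nat)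
  (Hd : forall l l', (l <= l')%nat -> (l' <= qs)%nat -> (d l <= d l')%nat)
  (Hrho : -1 < rho < 1) (Hsigma : 0 < sigma) (Hkappa : 0 < kappa)
  (Hkap : forall l, (1 <= l <= s)%nat -> kappa <= kap l)
  (Hlin : sigma ^ 2 * INR qs * logeq q qs / ((1 - rho ^ 2) * kappa) <= c * INR n)
  (Hsqrt : sigma ^ 2 * sqrt (INR qs * INR (d qs) * logeq q qs) / ((1 - rho ^ 2) * kappa)
           <= c * INR n).

Lemma thm1_exponent_ge l : (1 <= l <= s)%nat ->
  c1 / (2 * c) * (INR qs * logeq q qs) <=
  c1 * (INR n ^ 2 * (1 - rho ^ 2) ^ 2 * kap l ^ 2) /
    (sigma ^ 4 * INR (d (qs - s + l)%nat) + sigma ^ 2 * INR n * (1 - rho ^ 2) * kap l).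
Proof.
  intros Hl.
  assert (Ht : 0 < 1 - rho ^ 2) by nra.
  assert (HtK : 0 < (1 - rho ^ 2) * kappa) by nra.
  assert (HL : 1 <= logeq q qs) by (apply logeq_ge_1; lia).
  assert (HS : 1 <= INR qs) by (apply (le_INR 1); lia).
  replace (c1 / (2 * c) * (INR qs * logeq q qs)) with (c1 * (INR qs * logeq q qs / (2 * c)))
    by (field; lra).
  unfold Rdiv at 2; rewrite Rmult_assoc; apply Rmult_le_compat_l; [lra|].
  apply tail_exponent_ge with (kappa := kappa) (D := INR (d qs)); try lra.
  - apply Rmult_le_pos; lra.
  - apply lt_0_INR; lia.
  - split; [lra|apply Hkap, Hl].
  - split; [apply pos_INR|apply le_INR, Hd; lia].
  - rewrite <- Rmult_assoc; now apply le_mul_of_div_le.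
  - replace (sigma ^ 4) with ((sigma ^ 2) ^ 2) by ring.
    replace (INR qs * logeq q qs * INR (d qs)) with (INR qs * INR (d qs) * logeq q qs) by ring.
    apply sqr_le_of_mul_sqrt_le; [apply pow_le; lra| |now apply le_mul_of_div_le].
    pose proof (pos_INR (d qs)); apply Rmult_le_pos; [apply Rmult_le_pos|]; lra.
Qed.

Lemma thm1_summand_le l m : (1 <= l <= s)%nat -> (m <= qs - (s - l))%nat ->
  binomR s l * binomR (q - s) m * 4 *
  exp (- c1 * (INR n ^ 2 * (1 - rho ^ 2) ^ 2 * kap l ^ 2) /
    (sigma ^ 4 * INR (d (qs - s + l)%nat) + sigma ^ 2 * INR n * (1 - rho ^ 2) * kap l))
  <= 4 * exp (INR qs + INR qs * logeq q qs - c1 / (2 * c) * (INR qs * logeq q qs)).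
Proof.
  intros Hl Hm.
  assert (Hsl : binomR s l <= exp (INR qs)).
  { eapply Rle_trans; [|apply exp_le_exp, le_INR, Hsqs].
    pose proof (binomR_mul_pow_le_exp s l 1 ltac:(lra)) as Hb.
    now rewrite pow1, !Rmult_1_r in Hb. }
  assert (Hqm : binomR (q - s) m <= exp (INR qs * logeq q qs))
    by (apply binomR_le_exp_logeq; lia).
  set (a := INR qs * logeq q qs); set (K := c1 / (2 * c)).
  set (X := INR n ^ 2 * (1 - rho ^ 2) ^ 2 * kap l ^ 2).
  set (Y := sigma ^ 4 * INR (d (qs - s + l)%nat) + sigma ^ 2 * INR n * (1 - rho ^ 2) * kap l).
  replace (4 * exp (INR qs + a - K * a)) with (exp (INR qs) * exp a * 4 * exp (- (K * a)))
    by (unfold Rminus; rewrite !exp_plus; ring).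
  replace (- c1 * X / Y) with (- (c1 * X / Y)) by (unfold Rdiv; ring).
  pose proof (Rmult_le_pos _ _ (binomR_nonneg s l) (binomR_nonneg (q - s) m)).
  apply Rmult_le_compat; [lra|left; apply exp_pos| |].
  - apply Rmult_le_compat_r; [lra|]; apply Rmult_le_compat; auto using binomR_nonneg.
  - apply exp_le_exp, Ropp_le_contravar, thm1_exponent_ge, Hl.
Qed.

Lemma thm1_sum_le :
  thm1_sum c1 q qs s n d rho sigma kap <= INR qs * (INR qs + 1) *
    (4 * exp (INR qs + INR qs * logeq q qs - c1 / (2 * c) * (INR qs * logeq q qs))).
Proof.
  set (B := 4 * exp (INR qs + INR qs * logeq q qs - c1 / (2 * c) * (INR qs * logeq q qs))).
  assert (HB : 0 <= B) by (left; apply Rmult_lt_0_compat; [lra|apply exp_pos]).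
  unfold thm1_sum.
  apply Rle_trans with (sumR s (fun _ => (INR qs + 1) * B)).
  - apply sumR_le; intros i Hi; cbv beta zeta.
    apply Rle_trans with (sumR (S (qs - (s - S i))) (fun _ => B)).
    { apply sumR_le; intros m Hm; apply thm1_summand_le; lia. }
    rewrite sumR_const; apply Rmult_le_compat_r; [exact HB|].
    rewrite <- S_INR; apply le_INR; lia.
  - rewrite sumR_const, <- Rmult_assoc; apply Rmult_le_compat_r; [exact HB|].
    apply Rmult_le_compat_r; [pose proof (pos_INR qs); lra|apply le_INR, Hsqs].
Qed.

Lemma thm1_sum_le_half_Rpower c2 : 0 < c2 -> c2 + 7 <= c1 / (2 * c) ->
  thm1_sum c1 q qs s n d rho sigma kap <= Rpower (INR q) (- c2) / 2.
Proof.
  intros Hc2 HK.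
  assert (HS : 1 <= INR qs) by (apply (le_INR 1); lia).
  assert (Hq : 1 <= INR q) by (apply (le_INR 1); lia).
  assert (Ha : INR qs <= INR qs * logeq q qs)
    by (pose proof (logeq_ge_1 q qs ltac:(lia)); nra).
  assert (Hlnq : 0 <= ln (INR q)) by (rewrite <- ln_1; apply ln_le_ln; lra).
  eapply Rle_trans; [apply thm1_sum_le|].
  eapply Rle_trans; [apply (count_mul_exp_le _ _ _ c2 (ln (INR q))); try lra|].
  - apply one_add_ln_le_mul_logeq; lia.
  - apply exp_opp_le_half_Rpower; [lra|]; pose proof ln_2_le_1; lra.
Qed.

End Theorem1Sum.

Definition corollary1_constant (c1 c2 : R) : R :=
  Rmin 1 (Rmin (3 / (16 * (c2 + 1))) (c1 / (2 * (c2 + 7)))).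

Lemma corollary1_constant_spec c1 c2 : 0 < c1 -> 0 < c2 ->
  let c3 := corollary1_constant c1 c2 in
  0 < c3 <= 1 /\ c3 * (16 * (c2 + 1)) <= 3 /\ c2 + 7 <= c1 / (2 * c3).
Proof.
  intros Hc1 Hc2 c3.
  assert (Hc3 : 0 < c3 <= 1).
  { split; [|apply Rmin_l].
    repeat apply Rmin_pos; try apply Rdiv_lt_0_compat; lra. }
  split; [exact Hc3|split].
  - apply (Rmult_le_reg_r (/ (16 * (c2 + 1)))); [apply Rinv_0_lt_compat; lra|].
    rewrite Rmult_assoc, Rinv_r by lra; rewrite Rmult_1_r.
    eapply Rle_trans; [apply Rmin_r|apply Rmin_l].
  - apply (Rmult_le_reg_r (2 * c3)); [lra|].
    replace (c1 / (2 * c3) * (2 * c3)) with c1 by (field; lra).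
    apply (Rmult_le_reg_r (/ (2 * (c2 + 7)))); [apply Rinv_0_lt_compat; lra|].
    replace ((c2 + 7) * (2 * c3) * / (2 * (c2 + 7))) with c3 by (field; lra).
    eapply Rle_trans; [apply Rmin_r|apply Rmin_r].
Qed.

Lemma exp_sample_size_le_half_Rpower c c2 n D q : 0 < c2 -> 2 <= q -> 0 < D -> 0 <= n ->
  c * (16 * (c2 + 1)) <= 3 -> D * ln q <= c * n ->
  exp (- (3 * n) / (16 * D)) <= Rpower q (- c2) / 2.
Proof.
  intros Hc2 Hq HD Hn Hc Hsize.
  assert (Hln2 : ln 2 <= ln q) by (apply ln_le_ln; lra).
  unfold Rdiv; rewrite Ropp_mult_distr_l_reverse; apply exp_opp_le_half_Rpower; [lra|].
  apply Rle_trans with ((c2 + 1) * ln q); [lra|].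
  apply (Rmult_le_reg_r (16 * D)); [lra|].
  replace (3 * n * / (16 * D) * (16 * D)) with (3 * n) by (field; lra).
  apply Rle_trans with (16 * (c2 + 1) * (c * n)); [|nra].
  replace ((c2 + 1) * ln q * (16 * D)) with (16 * (c2 + 1) * (D * ln q)) by ring.
  apply Rmult_le_compat_l; lra.
Qed.

Theorem corollary1 :
  forall c1 : R, 0 < c1 ->
  forall c2 : R, 0 < c2 ->
  exists c3 : R, 0 < c3 /\
  forall (q qs s n : nat) (d : nat -> nat) (rho sigma kappa : R)
         (kap : nat -> R) (P PE : R),
    (1 <= s)%nat -> (s <= qs)%nat -> (qs <= q)%nat -> (1 <= n)%nat ->
    (forall l l', (l <= l')%nat -> (l' <= qs)%nat -> (d l <= d l')%nat) ->
    (1 <= d qs)%nat ->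
    -1 < rho < 1 ->
    0 < sigma ->
    0 < kappa ->
    (forall l, (1 <= l <= s)%nat -> kappa <= kap l) ->
    0 <= P <= 1 -> 0 <= PE <= 1 ->
    P >= 1 - PE - exp (- (3 * INR n) / (16 * INR (d qs)))
           - thm1_sum c1 q qs s n d rho sigma kap ->
    Rmax (Rmax (sigma^2 * sqrt (INR qs * INR (d qs) * logeq q qs)
                  / ((1 - rho^2) * kappa))
               (sigma^2 * INR qs * logeq q qs / ((1 - rho^2) * kappa)))
         (INR (d qs) * ln (INR q))
      <= c3 * INR n ->
    P >= 1 - PE - Rpower (INR q) (- c2).
Proof.
  intros c1 Hc1 c2 Hc2.
  destruct (corollary1_constant_spec c1 c2 Hc1 Hc2) as (Hc3 & Hc3_exp & Hc3_sum).
  exists (corollary1_constant c1 c2); split; [apply Hc3|].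
  intros q qs s n d rho sigma kappa kap P PE Hs Hsqs Hqsq Hn Hd Hd1 Hrho Hsigma Hkappa Hkap
    HP HPE Hthm1 Hsize.
  destruct (Nat.eq_dec q 1) as [->|Hq1].
  { unfold Rpower; rewrite INR_1, ln_1, Rmult_0_r, exp_0; lra. }
  assert (Hsqrt := Rle_trans _ _ _ (Rle_trans _ _ _ (Rmax_l _ _) (Rmax_l _ _)) Hsize).
  assert (Hlin := Rle_trans _ _ _ (Rle_trans _ _ _ (Rmax_r _ _) (Rmax_l _ _)) Hsize).
  assert (Hlogq := Rle_trans _ _ _ (Rmax_r _ _) Hsize).
  assert (Hexp : exp (- (3 * INR n) / (16 * INR (d qs))) <= Rpower (INR q) (- c2) / 2).
  { apply exp_sample_size_le_half_Rpower with (c := corollary1_constant c1 c2);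
      auto using pos_INR.
    - apply (le_INR 2); lia.
    - apply (lt_INR 0); lia. }
  assert (Hsum : thm1_sum c1 q qs s n d rho sigma kap <= Rpower (INR q) (- c2) / 2)
    by (eapply thm1_sum_le_half_Rpower; eassumption).
  lra.
Qed.
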